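(* If $T$ is a tree of order $n\geq 3$ with maximum degree $\Delta(T)$, then $px_k(T)=\Delta(T)$ for each integer $k$ with $3\leq k\leq n$.
   Context: All graphs are finite, simple, undirected and connected. An edge-coloring of a graph assigns a color to each edge (adjacent edges may receive the same color). A tree in an edge-colored graph is proper if any two adjacent edges of the tree receive different colors. For $S\subseteq V(G)$, an $S$-tree is a subgraph of $G$ that is a tree containing all vertices of $S$. For a connected graph $G$ of order $n$ and an integer $k$ with $2\le k\le n$, an edge-coloring of $G$ is a $k$-proper coloring if for every set $S$ of $k$ vertices of $G$ there exists a proper $S$-tree in $G$. The $k$-proper index $px_k(G)$ is the minimum number of colors used in a $k$-proper coloring of $G$. *)

From mathcomp Require Import all_boot.
Set Implicit Arguments. Unset Strict Implicit. Unset Printing Implicit Defensive.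

Section Graphs.
Variable V : finType.

Definition simple_graph (adj : rel V) : Prop :=
  symmetric adj /\ irreflexive adj.

Definition acyclic (eH : rel V) : Prop :=
  forall s : seq V, uniq s -> 2 < size s -> ~~ cycle eH s.

Definition is_tree (VH : {set V}) (eH : rel V) : Prop :=
  VH != set0 /\
  (forall x y, x \in VH -> y \in VH -> connect eH x y) /\
  acyclic eH.

Definition subgraph (adj : rel V) (VH : {set V}) (eH : rel V) : Prop :=
  symmetric eH /\ (forall x y, eH x y -> [&& adj x y, x \in VH & y \in VH]).

Definition edge_coloring (adj : rel V) (m : nat) (c : V -> V -> 'I_m) : Prop :=
  forall x y, adj x y -> c x y = c y x.

Definition proper_sub {m} (c : V -> V -> 'I_m) (eH : rel V) : Prop :=
  forall x y z, eH x y -> eH x z -> y != z -> c x y != c x z.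

Definition k_proper_coloring (adj : rel V) (k m : nat) (c : V -> V -> 'I_m)
  : Prop :=
  edge_coloring adj c /\
  forall S : {set V}, #|S| = k ->
    exists (VH : {set V}) (eH : rel V),
      [/\ subgraph adj VH eH, S \subset VH, is_tree VH eH & proper_sub c eH].

Definition is_px (adj : rel V) (k m : nat) : Prop :=
  (exists c : V -> V -> 'I_m, k_proper_coloring adj k c) /\
  (forall m', m' < m -> forall c : V -> V -> 'I_m', ~ k_proper_coloring adj k c).

Definition deg (adj : rel V) (v : V) : nat := #|[set w | adj v w]|.

Definition max_degree (adj : rel V) : nat := \max_(v : V) deg adj v.

End Graphs.

(* Lower bound: if S contains two neighbours a, b of a vertex v, the unique
   a-b path of the tree passes through v, so every S-tree contains the edges
   va and vb; hence a k-proper colouring (k >= 2) is injective on the edges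
   at v and uses at least deg v colours.
   Upper bound: colour the tree greedily, growing a connected subtree one leaf
   at a time.  A new vertex w has a single neighbour u in the subtree, and u
   has at most deg u - 1 <= Delta - 1 coloured edges, so a free colour
   remains for uw.  The resulting proper colouring of the whole tree makes
   the tree itself a proper S-tree for every S. *)
From mathcomp Require Import all_boot.
Set Implicit Arguments. Unset Strict Implicit. Unset Printing Implicit Defensive.

Lemma card_superset (T : finType) (A : {set T}) k : #|A| <= k <= #|T| ->
  exists2 S : {set T}, #|S| = k & A \subset S.
Proof.
elim: k => [|k IHk] /andP[Ak kT].
  by exists A => //; apply/eqP; rewrite -leqn0.
move: Ak; rewrite leq_eqVlt => /orP[/eqP <-|Ak]; first by exists A.
have [S cardS AS] : exists2 S : {set T}, #|S| = k & A \subset S.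
  by apply: IHk; rewrite -ltnS Ak ltnW.
have /subsetPn[x _ xNS] : ~~ ([set: T] \subset S).
  by apply: contraTN kT => /subset_leq_card; rewrite cardsT cardS -leqNgt.
exists (x |: S); first by rewrite cardsU1 xNS cardS.
exact: subset_trans AS (subsetU1 x S).
Qed.

Section Acyclic.
Variable V : finType.

Lemma acyclic_closed_path_nil (e : rel V) v a (p : seq V) : acyclic e ->
  uniq [:: v, a & p] -> e v a -> path e a p -> e (last a p) v -> p = [::].
Proof.
move=> e_acyclic vap_uniq va ap_path pv; case: p vap_uniq ap_path pv => // b p.
move=> vap_uniq ap_path pv; case/negP: (e_acyclic _ vap_uniq isT).
rewrite /cycle -cats1 cat_path /= va.
by move: ap_path pv => /= -> ->.
Qed.

Lemma acyclic_connect_neighbors (adj eH : rel V) v a b :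
  symmetric adj -> irreflexive adj -> acyclic adj -> subrel eH adj ->
  adj v a -> adj v b -> a != b -> connect eH a b -> eH a v.
Proof.
move=> adj_sym adj_irr adj_acyclic eH_adj va vb aNb /connectP[p p_path b_last].
case/shortenP: p_path b_last => q q_path q_uniq _ b_last.
have [vq|vNq] := boolP (v \in q).
  case/splitPr: vq q_path q_uniq => q1 q2.
  rewrite cat_path -cat_cons cat_uniq /= => /and3P[q1_path q1v _].
  case/and3P=> q1_uniq /norP[vNq1 _] _.
  suff q1_nil : q1 = [::] by move: q1v; rewrite q1_nil.
  apply: (acyclic_closed_path_nil (v := v) (a := a) adj_acyclic) => //.
  - by rewrite cons_uniq vNq1.
  - exact: sub_path q1_path.
  - exact: eH_adj.
have aNv : a != v by apply: contraTneq va => ->; rewrite adj_irr.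
suff q_nil : q = [::] by rewrite b_last q_nil eqxx in aNb.
apply: (acyclic_closed_path_nil (v := v) (a := a) adj_acyclic) => //.
- by rewrite cons_uniq inE negb_or eq_sym aNv vNq q_uniq.
- exact: sub_path q_path.
- by rewrite -b_last adj_sym.
Qed.

End Acyclic.

Section Tree.
Variables (V : finType) (adj : rel V).
Hypotheses (adj_sym : symmetric adj) (adj_irr : irreflexive adj).
Hypotheses (adj_acyclic : acyclic adj) (adj_conn : forall x y, connect adj x y).

Lemma k_proper_coloring_inj_neighbors k m (c : V -> V -> 'I_m) v :
  1 < k <= #|V| -> k_proper_coloring adj k c ->
  {in [set w | adj v w] &, injective (c v)}.
Proof.
move=> /andP[k_gt1 k_le] [_ c_proper] a b; rewrite !inE => va vb cab.
apply/eqP; apply: contraT => aNb.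
have [|S cardS abS] := @card_superset _ [set a; b] k.
  by rewrite k_le andbT cards2 (leq_ltn_trans (leq_b1 _) k_gt1).
have [VH [eH [[eH_sym eH_sub] SVH [_ [eH_conn _]] eH_proper]]] := c_proper S cardS.
have eH_adj : subrel eH adj by move=> x y /eH_sub/and3P[].
have [aVH bVH] : a \in VH /\ b \in VH.
  by split; apply: (subsetP (subset_trans abS SVH)); rewrite !inE eqxx ?orbT.
have eH_va : eH v a.
  by rewrite eH_sym; apply: acyclic_connect_neighbors vb aNb (eH_conn a b aVH bVH).
have eH_vb : eH v b.
  rewrite eH_sym; apply: acyclic_connect_neighbors va (contra_neq esym aNb) _ => //.
  exact: eH_conn.
by move: (eH_proper v a b eH_va eH_vb aNb); rewrite cab eqxx.
Qed.

Lemma max_degree_le_k_proper k m (c : V -> V -> 'I_m) :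
  1 < k <= #|V| -> k_proper_coloring adj k c -> max_degree adj <= m.
Proof.
move=> k_bounds c_proper; apply/bigmax_leqP => v _.
rewrite /deg -(card_in_imset (k_proper_coloring_inj_neighbors k_bounds c_proper)).
by rewrite (leq_trans (max_card _)) ?card_ord.
Qed.

Definition induced (A : {set V}) : rel V :=
  [rel x y | [&& adj x y, x \in A & y \in A]].

Definition induced_connected (A : {set V}) :=
  forall x y, x \in A -> y \in A -> connect (induced A) x y.

Definition proper_on m (A : {set V}) (c : V -> V -> 'I_m) :=
  (forall x y, c x y = c y x) /\ proper_sub c (induced A).

Lemma induced_sym (A : {set V}) : symmetric (induced A).
Proof. by move=> x y; rewrite /induced /= adj_sym [(x \in A) && _]andbC. Qed.

Lemma induced_subrel (A B : {set V}) :
  A \subset B -> subrel (induced A) (induced B).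
Proof.
by move=> /subsetP AB x y /and3P[xy /AB xB /AB yB]; rewrite /induced /= xy xB yB.
Qed.

Lemma exists_edge_out (A : {set V}) x y : x \in A -> y \notin A ->
  exists u w, [/\ u \in A, w \notin A & adj u w].
Proof.
move=> xA yNA.
have [/existsP[u /existsP[w /and3P[uA wNA uw]]]|no_edge] :=
  boolP [exists u, exists w, [&& u \in A, w \notin A & adj u w]].
  by exists u, w.
suff A_closed : closed adj (mem A).
  by move: (closed_connect A_closed (adj_conn x y)); rewrite /= xA (negbTE yNA).
move=> u w uw; apply/idP/idP => [uA|wA]; apply: contraNT no_edge => NA.
  by apply/existsP; exists u; apply/existsP; exists w; rewrite uA NA uw.
by apply/existsP; exists w; apply/existsP; exists u; rewrite wA NA adj_sym uw.
Qed.

Lemma induced_path_sub (A : {set V}) x q : path (induced A) x q -> {subset q <= A}.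
Proof.
elim: q x => //= y q IHq x /andP[/and3P[_ _ yA] yq] z.
by rewrite inE => /orP[/eqP -> // | /(IHq y yq)].
Qed.

Lemma induced_connected_unique_neighbor (A : {set V}) w u u' :
  induced_connected A -> w \notin A -> u \in A -> u' \in A ->
  adj u w -> adj u' w -> u = u'.
Proof.
move=> A_conn wNA uA u'A uw u'w; apply/eqP; apply: contraT => uNu'.
case/connectP: (A_conn u u' uA u'A) => p p_path u'_last.
case/shortenP: p_path u'_last => q q_path q_uniq _ u'_last.
have wNq : w \notin q by apply: contra wNA => /(induced_path_sub q_path).
have wNu : w != u by apply: contraNneq wNA => ->.
suff q_nil : q = [::] by rewrite u'_last q_nil eqxx in uNu'.
apply: (acyclic_closed_path_nil (v := w) (a := u) adj_acyclic) => //.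
- by rewrite cons_uniq inE negb_or wNu wNq q_uniq.
- by rewrite adj_sym.
- by apply: sub_path q_path => x y /and3P[].
- by rewrite -u'_last.
Qed.

Lemma induced_connected_setU1 (A : {set V}) u w :
  induced_connected A -> u \in A -> adj u w -> induced_connected (w |: A).
Proof.
move=> A_conn uA uw.
have within_A x y : x \in A -> y \in A -> connect (induced (w |: A)) x y.
  move=> xA yA; apply: connect_sub (A_conn x y xA yA) => a b ab.
  exact/connect1/(induced_subrel (subsetU1 w A)).
have from_w x : x \in A -> connect (induced (w |: A)) w x.
  move=> xA; apply: connect_trans (within_A u x uA xA).
  by apply: connect1; rewrite /induced /= adj_sym uw !inE eqxx uA orbT.
have induced_connect_sym := sym_connect_sym (induced_sym (w |: A)).
move=> x y /setU1P[-> | xA] /setU1P[-> | yA].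
- exact: connect0.
- exact: from_w.
- by rewrite induced_connect_sym; apply: from_w.
- exact: within_A.
Qed.

Lemma free_color m (c : V -> V -> 'I_m) (A : {set V}) u w :
  adj u w -> w \notin A -> deg adj u <= m ->
  exists col, forall y, y \in A -> adj u y -> c u y != col.
Proof.
move=> uw wNA deg_u.
pose used := [set c u y | y in [set y in A | adj u y]].
have used_lt : #|used| < m.
  apply: leq_ltn_trans (leq_imset_card _ _) (leq_trans _ deg_u).
  rewrite /deg [X in _ < X](cardsD1 w) inE uw add1n ltnS; apply: subset_leq_card.
  apply/subsetP => y; rewrite !inE => /andP[yA ->]; rewrite andbT.
  by apply: contraNneq wNA => <-.
have /subsetPn[col _ colNused] : ~~ ([set: 'I_m] \subset used).
  by apply: contraTN used_lt => /subset_leq_card; rewrite cardsT card_ord -leqNgt.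
exists col => y yA uy; apply: contraNneq colNused => <-.
by rewrite imset_f // inE yA uy.
Qed.

Lemma proper_on_setU1 m (A : {set V}) u w (c : V -> V -> 'I_m) :
  induced_connected A -> u \in A -> w \notin A -> adj u w -> deg adj u <= m ->
  proper_on A c -> exists c' : V -> V -> 'I_m, proper_on (w |: A) c'.
Proof.
move=> A_conn uA wNA uw deg_u [c_sym c_proper].
have [col col_free] := free_color c uw wNA deg_u.
have uNw : u != w by apply: contraNneq wNA => <-.
have nbr_w x : x \in A -> adj x w -> x = u.
  by move=> xA xw; apply: induced_connected_unique_neighbor A_conn wNA xA uA xw uw.
have nbr_of_w y : adj w y -> y \in w |: A -> y = u.
  move=> wy /setU1P[yw | yA]; first by move: wy; rewrite yw adj_irr.
  by apply: nbr_w; rewrite // adj_sym.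
pose c' x y :=
  if ((x == u) && (y == w)) || ((x == w) && (y == u)) then col else c x y.
have c'E x y : x != w -> y != w -> c' x y = c x y.
  by move=> xNw yNw; rewrite /c' (negbTE xNw) (negbTE yNw) !andbF.
have c'uw : c' u w = col by rewrite /c' !eqxx.
have in_A x : x \in w |: A -> x != w -> x \in A.
  by case/setU1P=> [-> | //]; rewrite eqxx.
exists c'; split=> [x y | x y z].
  rewrite /c' c_sym.
  by case: (x == u); case: (x == w); case: (y == u); case: (y == w).
move=> /and3P[xy xwA ywA] /and3P[xz _ zwA] yNz.
have [xw | xNw] := eqVneq x w.
  by subst x; move: yNz; rewrite (nbr_of_w y) // (nbr_of_w z) // eqxx.
have xA := in_A x xwA xNw.
wlog yNw : y z xy xz ywA zwA yNz / y != w.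
  move=> hwlog; have [yw | ] := eqVneq y w; last exact: hwlog.
  rewrite eq_sym; apply: hwlog => //; first by rewrite eq_sym.
  by rewrite -yw eq_sym.
have yA := in_A y ywA yNw.
have [zw | zNw] := eqVneq z w.
  have xu : x = u by apply: nbr_w; rewrite // -zw.
  by rewrite xu zw c'uw c'E // col_free // -xu.
have zA := in_A z zwA zNw.
by rewrite !c'E //; apply: c_proper; rewrite // /induced /= ?xy ?xz xA ?yA ?zA.
Qed.

Lemma exists_proper_on_card n : 0 < max_degree adj -> 0 < n <= #|V| ->
  exists A : {set V}, [/\ #|A| = n, induced_connected A &
    exists c : V -> V -> 'I_(max_degree adj), proper_on A c].
Proof.
move=> D_gt0; elim: n => // -[_ | n IHn] /andP[_ n_lt].
  case/card_gt0P: n_lt => r _; exists [set r]; split; first exact: cards1.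
    by move=> x y /set1P -> /set1P ->; apply: connect0.
  exists (fun _ _ => Ordinal D_gt0); split=> // x y z.
  by case/and3P=> xy /set1P xr /set1P yr; move: xy; rewrite xr yr adj_irr.
have [A [cardA A_conn [c c_proper]]] := IHn (ltnW n_lt).
have [x xA] : exists x, x \in A by apply/set0Pn; rewrite -card_gt0 cardA.
have /subsetPn[y _ yNA] : ~~ ([set: V] \subset A).
  by apply: contraTN n_lt => /subset_leq_card; rewrite cardsT cardA -leqNgt.
have [u [w [uA wNA uw]]] := exists_edge_out xA yNA.
have [c' c'_proper] := proper_on_setU1 A_conn uA wNA uw (leq_bigmax u) c_proper.
exists (w |: A); split; first by rewrite cardsU1 wNA cardA.
  exact: induced_connected_setU1 A_conn uA uw.
by exists c'.
Qed.

Lemma max_degree_gt0 : 1 < #|V| -> 0 < max_degree adj.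
Proof.
case/card_gt1P=> x [y [_ _ xNy]].
have yNx : y \notin [set x] by rewrite inE eq_sym.
have [u [w [_ _ uw]]] := exists_edge_out (set11 x) yNx.
by apply: leq_trans (leq_bigmax u); apply/card_gt0P; exists w; rewrite inE.
Qed.

Lemma exists_proper_coloring : 1 < #|V| ->
  exists c : V -> V -> 'I_(max_degree adj), proper_on [set: V] c.
Proof.
move=> V_gt1.
have [|A [cardA _ [c c_proper]]] :=
  exists_proper_on_card (max_degree_gt0 V_gt1) (n := #|V|).
  by rewrite leqnn (ltnW V_gt1).
have A_setT : A = [set: V].
  by apply/eqP; rewrite eqEcard subsetT cardsT cardA leqnn.
by exists c; rewrite -A_setT.
Qed.

Lemma proper_on_setT_k_proper k m (c : V -> V -> 'I_m) :
  is_tree [set: V] adj -> proper_on [set: V] c -> k_proper_coloring adj k c.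
Proof.
move=> adj_tree [c_sym c_proper]; split=> [x y _ | S _]; first exact: c_sym.
exists [set: V], adj; split=> //.
- by split=> // x y ->; rewrite !inE.
- by move=> x y z xy xz; apply: c_proper; rewrite /induced /= ?xy ?xz !inE.
Qed.

End Tree.

Theorem mainTheorem9 (V : finType) (adj : rel V) :
  simple_graph adj ->
  is_tree [set: V] adj ->
  3 <= #|V| ->
  forall k : nat, 3 <= k <= #|V| ->
    is_px adj k (max_degree adj).
Proof.
move=> [adj_sym adj_irr] adj_tree V_ge3 k /andP[k_ge3 k_le].
have [_ [adj_conn adj_acyclic]] := adj_tree.
have conn x y : connect adj x y by apply: adj_conn; rewrite inE.
split.
  have [c c_proper] :=
    exists_proper_coloring adj_sym adj_irr adj_acyclic conn (ltnW V_ge3).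
  by exists c; apply: proper_on_setT_k_proper.
move=> m m_lt c c_k_proper.
have k_bounds : 1 < k <= #|V| by rewrite k_le (ltnW k_ge3).
have := max_degree_le_k_proper adj_sym adj_irr adj_acyclic k_bounds c_k_proper.
by rewrite leqNgt m_lt.
Qed.
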